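(* Let $\rho$ be a density operator on $\mathcal H_A\otimes\mathcal H_B$ ($\dim\mathcal H_A=\dim\mathcal H_B=2$) and let $\mu$ be an ansatz. Then $\mathscr M_A'\subseteq\operatorname{box}(\mu)$ if and only if $\mathscr S_A'\subseteq\operatorname{box}(\mu)$.
   Context: $\sigma_0=\mathbb I,\sigma_1,\sigma_2,\sigma_3$ are the identity and Pauli matrices; $\mathbf r\cdot\sigma=\sum_{k=1}^3r_k\sigma_k$. Alice's EPR map is $\rho^{A\to B}(A)=\operatorname{Tr}_A[\rho(A\otimes\mathbb I^B)]$ for Hermitian $A$ on $\mathcal H_A$; $X'$ denotes the image of a set $X$ under this map. $\mathscr M_A=\{M \text{ Hermitian on }\mathcal H_A: O\le M\le\mathbb I^A\}$ and $\mathscr S_A=\{M\in\mathscr M_A:\operatorname{Tr}M=1\}=\{\tfrac12(\mathbb I^A+\mathbf r\cdot\sigma^A):|\mathbf r|\le1\}$. An ansatz is a Borel probability measure $\mu$ on the unit sphere $S^2\subset\mathbb R^3$ with $\int\tfrac12(\mathbb I^B+\mathbf n\cdot\sigma^B)\,d\mu(\mathbf n)=\operatorname{Tr}_A\rho$, and $\operatorname{box}(\mu)=\{\int\beta(\mathbf n)\tfrac12(\mathbb I^B+\mathbf n\cdot\sigma^B)\,d\mu(\mathbf n):\beta:S^2\to[0,1]\text{ Borel}\}$. *)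

From HB Require Import structures.
From mathcomp Require Import all_boot all_order all_algebra complex.
From mathcomp Require Import all_classical all_reals all_analysis.
Set Implicit Arguments. Unset Strict Implicit. Unset Printing Implicit Defensive.
Import Order.TTheory GRing.Theory Num.Theory.
Local Open Scope ring_scope.
Local Open Scope classical_set_scope.

Section Defs.
Variable R : realType.
Local Notation C := R[i].

Definition adj {m n} (M : 'M[C]_(m, n)) : 'M[C]_(n, m) :=
  \matrix_(i, j) (M j i)^*.

Definition hermitian {n} (M : 'M[C]_n) : Prop := adj M = M.

Definition psd {n} (M : 'M[C]_n) : Prop :=
  hermitian M /\ forall v : 'cV[C]_n, 0 <= (adj v *m M *m v) 0 0.

Definition loewner_le {n} (M N : 'M[C]_n) : Prop := psd (N - M).

Definition density (rho : 'M[C]_4) : Prop := psd rho /\ \tr rho = 1.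

(* basis index of |a> (x) |b> in C^2 (x) C^2 = C^4 *)
Definition tidx (a b : 'I_2) : 'I_4 := inord (2 * a + b).

(* A (x) I^B *)
Definition tens_I (A : 'M[C]_2) : 'M[C]_4 :=
  \matrix_(i, j) \sum_(a < 2) \sum_(b < 2) \sum_(a' < 2) \sum_(b' < 2)
     (if (i == tidx a b) && (j == tidx a' b') then A a a' * (b == b')%:R else 0).

Definition ptrA (X : 'M[C]_4) : 'M[C]_2 :=
  \matrix_(b, b') \sum_(a < 2) X (tidx a b) (tidx a b').

Definition EPR (rho : 'M[C]_4) (A : 'M[C]_2) : 'M[C]_2 := ptrA (rho *m tens_I A).

Definition sigma1 : 'M[C]_2 := \matrix_(i, j) (if i != j then 1 else 0).
Definition sigma2 : 'M[C]_2 :=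
  \matrix_(i, j) (if (i == 0) && (j == 1) then - 'i
                  else if (i == 1) && (j == 0) then 'i else 0).
Definition sigma3 : 'M[C]_2 :=
  \matrix_(i, j) (if i == j then (if i == 0 then 1 else -1) else 0).

Definition R3 := ((R * R) * R)%type.
Definition S2 : set R3 := [set n | n.1.1 ^+ 2 + n.1.2 ^+ 2 + n.2 ^+ 2 = 1].

Definition rsigma (r : R3) : 'M[C]_2 :=
  (r.1.1)%:C%C *: sigma1 + (r.1.2)%:C%C *: sigma2 + (r.2)%:C%C *: sigma3.

Definition qstate (r : R3) : 'M[C]_2 := (2%:R)^-1 *: (1%:M + rsigma r).

Definition M_A : set 'M[C]_2 := [set M | loewner_le 0 M /\ loewner_le M 1%:M].
Definition S_A : set 'M[C]_2 := [set M | M_A M /\ \tr M = 1].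

Definition mxint (mu : {measure set R3 -> \bar R}) (f : R3 -> 'M[C]_2) : 'M[C]_2 :=
  \matrix_(i, j)
    ((fine (\int[mu]_(n in S2) (complex.Re (f n i j))%:E))
      +i* (fine (\int[mu]_(n in S2) (complex.Im (f n i j))%:E)))%C.

Definition ansatz (rho : 'M[C]_4) (mu : probability R3 R) : Prop :=
  mu S2 = 1%E /\ mxint mu qstate = ptrA rho.

Definition box (mu : probability R3 R) : set 'M[C]_2 :=
  [set X | exists beta : R3 -> R,
     [/\ measurable_fun S2 beta,
         (forall n, S2 n -> 0 <= beta n <= 1) &
         X = mxint mu (fun n => (beta n)%:C%C *: qstate n)]].

End Defs.

(* Alice's map is linear and box(mu) is closed under two operations: scaling
   by r in [0, 1] (replace beta by r beta) and X |-> Tr_A rho - X (replace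
   beta by 1 - beta; the ansatz says that beta = 1 gives Tr_A rho).  An effect
   M of trace t <= 1 is t times a state, or 0 when t = 0.  If t > 1, then
   I - M is an effect of trace 2 - t < 1, and
   rho^{A->B}(M) = Tr_A rho - rho^{A->B}(I - M). *)

From Pilot Require Import Defs.
From HB Require Import structures.
From mathcomp Require Import all_boot all_order all_algebra complex.
From mathcomp Require Import all_classical all_reals all_analysis measurable_realfun.
From mathcomp Require Import ring lra.
Set Implicit Arguments. Unset Strict Implicit. Unset Printing Implicit Defensive.
Import Order.TTheory GRing.Theory Num.Theory.
Local Open Scope ring_scope.
Local Open Scope classical_set_scope.

Lemma ord2P (i : 'I_2) : i = 0 \/ i = 1.
Proof. by case: i => [[|[|n]] lt_i2] //; [left | right]; apply: val_inj. Qed.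

Lemma sum_ord2 (V : nmodType) (F : 'I_2 -> V) : \sum_(i < 2) F i = F 0 + F 1.
Proof. by rewrite big_ord_recl big_ord1; congr (F _ + F _); apply: val_inj. Qed.

Lemma tidx_eq (a b a' b' : 'I_2) :
  (tidx a b == tidx a' b') = (a == a') && (b == b').
Proof.
by case: (ord2P a) => ->; case: (ord2P b) => ->;
   case: (ord2P a') => ->; case: (ord2P b') => ->; rewrite -val_eqE /= !inordK.
Qed.

Lemma ord4_tidx (i : 'I_4) : exists a b, i = tidx a b.
Proof.
case: i => -[|[|[|[|n]]]] lt_i4 //; [exists 0, 0 | exists 0, 1 | exists 1, 0 | exists 1, 1];
  by apply: val_inj; rewrite /= inordK.
Qed.

Section TwoByTwo.
Variable R : realType.
Local Notation C := R[i].
Implicit Types (M : 'M[C]_2) (x y : C) (i j : 'I_2).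

Definition qform M x y : C :=
  x^* * M 0 0 * x + x^* * M 0 1 * y + y^* * M 1 0 * x + y^* * M 1 1 * y.

Lemma qformE M (v : 'cV[C]_2) : (adj v *m M *m v) 0 0 = qform M (v 0 0) (v 1 0).
Proof. by rewrite /qform !mxE !sum_ord2 !mxE !sum_ord2 !mxE; ring. Qed.

Lemma psd_qform M x y : psd M -> 0 <= qform M x y.
Proof.
case=> _ /(_ (\col_i (if i == 0 then x else y))).
by rewrite qformE !mxE.
Qed.

Lemma qform10 M : qform M 1 0 = M 0 0.
Proof. by rewrite /qform conjC1 conjC0; ring. Qed.

Lemma qform01 M : qform M 0 1 = M 1 1.
Proof. by rewrite /qform conjC1 conjC0; ring. Qed.

Lemma hermitianE M : Defs.hermitian M -> forall i j, (M j i)^* = M i j.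
Proof. by move=> /matrixP hM i j; rewrite -[RHS]hM mxE. Qed.

Lemma psdZ M (c : R) : 0 <= c -> psd M -> psd (c%:C%C *: M).
Proof.
move=> c_ge0 [hM pM]; split.
  by apply/matrixP => i j; rewrite !mxE rmorphM /= geC0_conj ?ler0c // (hermitianE hM).
move=> v; rewrite qformE.
have -> : qform (c%:C%C *: M) (v 0 0) (v 1 0) = c%:C%C * qform M (v 0 0) (v 1 0).
  by rewrite /qform !mxE; ring.
by rewrite mulr_ge0 ?ler0c // -qformE.
Qed.

(* For a 2x2 matrix, (tr M) I - M is the adjugate of M, whose quadratic form
   at (x, y) is the one of M at (conj y, - conj x). *)
Lemma psd_adjugate M : psd M -> psd ((\tr M)%:M - M).
Proof.
move=> pM; have [hM _] := pM; split.
  apply/matrixP => i j; rewrite !mxE /mxtrace sum_ord2.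
  by case: (ord2P i) => ->; case: (ord2P j) => -> /=;
     rewrite ?mulr1n ?mulr0n ?rmorphB ?rmorphD /= ?conjC0 ?(hermitianE hM).
move=> v; rewrite qformE.
have := psd_qform ((v 1 0)^*) (- (v 0 0)^*) pM.
congr (_ <= _); rewrite /qform !mxE /mxtrace sum_ord2 /= mulr1n mulr0n.
by rewrite rmorphN /= !conjCK; ring.
Qed.

(* Polarization: the values at (1, 0), (0, 1), (1, 1) and (1, i) determine M. *)
Lemma qform_eq0 M : (forall x y, qform M x y = 0) -> M = 0.
Proof.
move=> q0.
have M00 : M 0 0 = 0 by rewrite -qform10.
have M11 : M 1 1 = 0 by rewrite -qform01.
have e1 := q0 1 1; have ei := q0 1 'i%C.
rewrite /qform conjC1 M00 M11 in e1 ei.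
have Mi : ('i%C : C)^* = - 'i%C by apply/eqP; rewrite eq_complex /= oppr0 !eqxx.
rewrite Mi in ei.
have iNZ : ('i%C : C) != 0 by rewrite -normr_eq0 normCi oner_eq0.
have M10 : M 1 0 = - M 0 1 by apply/eqP; rewrite -subr_eq0 opprK -e1; apply/eqP; ring.
rewrite M10 in ei.
have : 'i%C * M 0 1 *+ 2 = 0 by rewrite -ei; ring.
move/eqP; rewrite mulrn_eq0 mulf_eq0 (negbTE iNZ) /= => /eqP M01.
apply/matrixP => i j; rewrite mxE.
by case: (ord2P i) => ->; case: (ord2P j) => -> //; rewrite M10 M01 oppr0.
Qed.

Lemma psd_trace_eq0 M : psd M -> \tr M = 0 -> M = 0.
Proof.
move=> pM tr0; apply: qform_eq0 => x y; apply/eqP.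
rewrite eq_le psd_qform // andbT -oppr_ge0.
have := psd_qform x y (psd_adjugate pM); rewrite tr0.
by congr (_ <= _); rewrite /qform !mxE /= ?mulr1n ?mulr0n; ring.
Qed.

End TwoByTwo.

Section Effects.
Variable R : realType.
Local Notation C := R[i].
Implicit Types (M : 'M[C]_2).

Lemma psd_diag_ge0 M (i : 'I_2) : psd M -> 0 <= M i i.
Proof.
by case: (ord2P i) => ->; [rewrite -qform10 | rewrite -qform01]; exact: psd_qform.
Qed.

Lemma effect_psd M : M_A M -> psd M /\ psd (1%:M - M).
Proof. by case; rewrite /loewner_le subr0. Qed.

Lemma effect_diag M (i : 'I_2) : M_A M -> 0 <= M i i <= 1.
Proof.
case/effect_psd => /(psd_diag_ge0 i) -> /(psd_diag_ge0 i).
by rewrite !mxE eqxx mulr1n subr_ge0.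
Qed.

Lemma effect_compl M : M_A M -> M_A (1%:M - M).
Proof.
case/effect_psd => pM pCM; split; rewrite /loewner_le ?subr0 //.
by rewrite opprB addrC subrK.
Qed.

Lemma effect_trace M : M_A M -> exists2 t : R, \tr M = t%:C%C & 0 <= t <= 2.
Proof.
move=> eM; have /andP[M00_ge0 M00_le1] := effect_diag 0 eM.
have /andP[M11_ge0 M11_le1] := effect_diag 1 eM.
have tr_ge0 : 0 <= \tr M by rewrite /mxtrace sum_ord2 addr_ge0.
have tr_le2 : \tr M <= 2 by rewrite /mxtrace sum_ord2 lerD.
exists (complex.Re (\tr M)); first by rewrite RRe_real ?ger0_real.
by move: tr_ge0 tr_le2; rewrite !lecE => /andP[_ ->] /andP[_ ->].
Qed.

Lemma effect_normalize M (t : R) : M_A M -> \tr M = t%:C%C -> 0 < t ->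
  S_A (t^-1%:C%C *: M).
Proof.
move=> eM trM t_gt0; have [pM pCM] := effect_psd eM.
have tVt : t^-1%:C%C * t%:C%C = 1 :> C by rewrite -rmorphM mulVf ?gt_eqF.
have t_ge0 : 0 <= t^-1 by rewrite invr_ge0 ltW.
split; last by rewrite mxtraceZ trM tVt.
split; rewrite /loewner_le ?subr0; first exact: psdZ.
have -> : 1%:M - t^-1%:C%C *: M = t^-1%:C%C *: ((\tr M)%:M - M).
  by rewrite scalerBr scale_scalar_mx trM tVt.
exact/psdZ/psd_adjugate.
Qed.

End Effects.

Section AliceMap.
Variable R : realType.
Local Notation C := R[i].

Lemma tens_I_is_linear : linear (@tens_I R).
Proof.
move=> c A B; apply/matrixP => i j; rewrite !mxE big_distrr -big_split.
apply: eq_bigr => a _; rewrite big_distrr -big_split.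
apply: eq_bigr => b _; rewrite big_distrr -big_split.
apply: eq_bigr => a' _; rewrite big_distrr -big_split.
by apply: eq_bigr => b' _; case: ifP => _ /=; rewrite ?mulr0 ?addr0 // !mxE mulrDl mulrA.
Qed.

HB.instance Definition _ :=
  GRing.isLinear.Build C 'M[C]_2 'M[C]_4 *:%R (@tens_I R) tens_I_is_linear.

Lemma ptrA_is_linear : linear (@ptrA R).
Proof.
move=> c X Y; apply/matrixP => i j; rewrite !mxE big_distrr -big_split.
by apply: eq_bigr => a _; rewrite !mxE.
Qed.

HB.instance Definition _ :=
  GRing.isLinear.Build C 'M[C]_4 'M[C]_2 *:%R (@ptrA R) ptrA_is_linear.

Variable rho : 'M[C]_4.

Lemma EPR_is_linear : linear (EPR rho).
Proof. by move=> c A B; rewrite /EPR linearP /= mulmxDr -scalemxAr linearP. Qed.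

HB.instance Definition _ :=
  GRing.isLinear.Build C 'M[C]_2 'M[C]_2 *:%R (EPR rho) EPR_is_linear.

Lemma tens_IE (A : 'M[C]_2) (a b a' b' : 'I_2) :
  tens_I A (tidx a b) (tidx a' b') = A a a' * (b == b')%:R.
Proof.
rewrite mxE !sum_ord2 !tidx_eq.
by case: (ord2P a) => ->; case: (ord2P b) => ->;
   case: (ord2P a') => ->; case: (ord2P b') => ->;
   rewrite /= ?add0r ?addr0.
Qed.

Lemma tens_I1 : tens_I (1%:M : 'M[C]_2) = 1%:M.
Proof.
apply/matrixP => i j.
have [a [b ->]] := ord4_tidx i; have [a' [b' ->]] := ord4_tidx j.
rewrite tens_IE !mxE tidx_eq.
by case: (a == a'); case: (b == b'); rewrite /= ?mul1r ?mul0r.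
Qed.

Lemma EPR1 : EPR rho 1%:M = ptrA rho.
Proof. by rewrite /EPR tens_I1 mulmx1. Qed.

End AliceMap.

Section StateCoordinates.
Variable R : realType.
Local Notation C := R[i].

Lemma ReD : {morph @complex.Re R : x y / x + y}.
Proof. by move=> [? ?] [? ?]. Qed.

Lemma ImD : {morph @complex.Im R : x y / x + y}.
Proof. by move=> [? ?] [? ?]. Qed.

Lemma Re_realM (x : R) (z : C) : complex.Re (x%:C%C * z) = x * complex.Re z.
Proof. by case: z => a b /=; ring. Qed.

Lemma Im_realM (x : R) (z : C) : complex.Im (x%:C%C * z) = x * complex.Im z.
Proof. by case: z => a b /=; ring. Qed.

Variable p : C -> R.
Hypothesis pD : {morph p : x y / x + y}.
Hypothesis p_realM : forall (x : R) (z : C), p (x%:C%C * z) = x * p z.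

Lemma qstate_coord_affine (n : R3 R) (i j : 'I_2) :
  p (qstate n i j) = 2^-1 * p (1%:M i j) + 2^-1 * p (sigma1 R i j) * n.1.1
                     + 2^-1 * p (sigma2 R i j) * n.1.2 + 2^-1 * p (sigma3 R i j) * n.2.
Proof.
have half : (2%:R)^-1 = (2^-1)%:C%C :> C by rewrite fmorphV rmorph_nat.
by rewrite !mxE half !(p_realM, pD); ring.
Qed.

End StateCoordinates.

Section Box.
Variable R : realType.
Local Notation C := R[i].
Local Notation T := (R3 R).
Local Notation S2 := (@S2 R).
Variable mu : probability T R.

Lemma measurable_S2 : measurable S2.
Proof.
have mf : measurable_fun setT (fun n : T => n.1.1 ^+ 2 + n.1.2 ^+ 2 + n.2 ^+ 2).
  by apply: measurable_funD; [apply: measurable_funD|]; apply: measurable_funX;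
    [exact: measurableT_comp | exact: measurableT_comp | exact: measurable_snd].
by have := mf measurableT [set 1] (measurable_set1 1); rewrite setTI.
Qed.

Lemma S2_coord_le1 (n : T) :
  S2 n -> [/\ `|n.1.1| <= 1, `|n.1.2| <= 1 & `|n.2| <= 1].
Proof.
by rewrite /S2 /= => n1; split; rewrite -ler_sqr ?nnegrE // expr1n real_normK ?num_real; nra.
Qed.

Lemma measurable_affine (c0 c1 c2 c3 : R) :
  measurable_fun setT (fun n : T => c0 + c1 * n.1.1 + c2 * n.1.2 + c3 * n.2).
Proof.
by do 3?apply: measurable_funD; do ?apply: measurable_funM;
  [ | | exact: measurableT_comp | | exact: measurableT_comp | | exact: measurable_snd].
Qed.

Lemma integrable_weighted_affine (beta : T -> R) (c0 c1 c2 c3 : R) :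
  measurable_fun S2 beta -> (forall n, S2 n -> 0 <= beta n <= 1) ->
  mu.-integrable S2
    (EFin \o (fun n => beta n * (c0 + c1 * n.1.1 + c2 * n.1.2 + c3 * n.2))).
Proof.
move=> mbeta beta01; apply: measurable_bounded_integrable.
- exact: measurable_S2.
- by rewrite (le_lt_trans (probability_le1 _ measurable_S2)) ?ltry.
- by apply: measurable_funM => //; exact: measurable_funTS (measurable_affine _ _ _ _).
exists (`|c0| + `|c1| + `|c2| + `|c3|); split; first exact: num_real.
move=> K K_gt n /= S2n; apply/ltW/(le_lt_trans _ K_gt).
have [n1 n2 n3] := S2_coord_le1 S2n; have /andP[b0 b1] := beta01 n S2n.
have c_le1 (c x : R) : `|x| <= 1 -> `|c * x| <= `|c|.
  by move=> x_le1; rewrite normrM ler_piMr.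
rewrite normrM (ger0_norm b0) (le_trans (ler_piMl (normr_ge0 _) b1)) //.
by do 3!(apply: (le_trans (ler_normD _ _)); apply: lerD; last exact: c_le1).
Qed.

Lemma integrable_weighted_coord (p : C -> R) (beta : T -> R) (i j : 'I_2) :
  {morph p : x y / x + y} -> (forall (x : R) (z : C), p (x%:C%C * z) = x * p z) ->
  measurable_fun S2 beta -> (forall n, S2 n -> 0 <= beta n <= 1) ->
  mu.-integrable S2 (EFin \o (fun n => beta n * p (qstate n i j))).
Proof.
move=> pD p_realM mbeta beta01.
under eq_fun do rewrite (qstate_coord_affine pD p_realM).
exact: integrable_weighted_affine.
Qed.

Lemma mxint_weightedE (beta : T -> R) :
  mxint mu (fun n => (beta n)%:C%C *: qstate n) =
  \matrix_(i, j) ((\int[mu]_(n in S2) (beta n * complex.Re (qstate n i j)))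
                  +i* (\int[mu]_(n in S2) (beta n * complex.Im (qstate n i j))))%C.
Proof.
apply/matrixP => i j; rewrite !mxE; congr (_ +i* _)%C; apply: eq_Rintegral => n _.
  by rewrite mxE Re_realM.
by rewrite mxE Im_realM.
Qed.

Lemma mxint_weightedZ (r : R) (beta : T -> R) :
  measurable_fun S2 beta -> (forall n, S2 n -> 0 <= beta n <= 1) ->
  r%:C%C *: mxint mu (fun n => (beta n)%:C%C *: qstate n) =
  mxint mu (fun n => (r * beta n)%:C%C *: qstate n).
Proof.
move=> mbeta beta01; rewrite !mxint_weightedE; apply/matrixP => i j; rewrite !mxE.
have RintZ (p : C -> R) : {morph p : x y / x + y} ->
    (forall (x : R) (z : C), p (x%:C%C * z) = x * p z) ->
    \int[mu]_(n in S2) (r * beta n * p (qstate n i j)) =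
    r * \int[mu]_(n in S2) (beta n * p (qstate n i j)).
  move=> pD p_realM; under eq_Rintegral do rewrite -mulrA.
  apply: (RintegralZl _ measurable_S2).
  exact: integrable_weighted_coord i j pD p_realM mbeta beta01.
rewrite (RintZ _ (@ReD R) (@Re_realM R)) (RintZ _ (@ImD R) (@Im_realM R)).
by move: (Rintegral _ _ _) (Rintegral _ _ _) => a b; simpc.
Qed.

Lemma mxint_weightedB (beta gamma : T -> R) :
  measurable_fun S2 beta -> (forall n, S2 n -> 0 <= beta n <= 1) ->
  measurable_fun S2 gamma -> (forall n, S2 n -> 0 <= gamma n <= 1) ->
  mxint mu (fun n => (beta n)%:C%C *: qstate n)
  - mxint mu (fun n => (gamma n)%:C%C *: qstate n) =
  mxint mu (fun n => (beta n - gamma n)%:C%C *: qstate n).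
Proof.
move=> mbeta beta01 mgamma gamma01.
rewrite !mxint_weightedE; apply/matrixP => i j; rewrite !mxE.
have RintB (p : C -> R) : {morph p : x y / x + y} ->
    (forall (x : R) (z : C), p (x%:C%C * z) = x * p z) ->
    \int[mu]_(n in S2) (beta n * p (qstate n i j))
    - \int[mu]_(n in S2) (gamma n * p (qstate n i j)) =
    \int[mu]_(n in S2) ((beta n - gamma n) * p (qstate n i j)).
  move=> pD p_realM; under [RHS]eq_Rintegral do rewrite mulrBl.
  by apply/esym/RintegralB; [exact: measurable_S2 | exact: integrable_weighted_coord ..].
rewrite -(RintB _ (@ReD R) (@Re_realM R)) -(RintB _ (@ImD R) (@Im_realM R)).
by move: (Rintegral _ _ _) (Rintegral _ _ _) (Rintegral _ _ _) (Rintegral _ _ _)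
  => a b c d; simpc.
Qed.

Lemma mxint_weighted1 :
  mxint mu (fun n => (1 : R)%:C%C *: qstate n) = mxint mu (@qstate R).
Proof. by congr mxint; apply/funext => n; rewrite scale1r. Qed.

Lemma box_scale (r : R) (X : 'M[C]_2) :
  0 <= r <= 1 -> box mu X -> box mu (r%:C%C *: X).
Proof.
move=> /andP[r_ge0 r_le1] [beta [mbeta beta01 ->]].
exists (fun n => r * beta n); split.
- exact: measurable_funM.
- by move=> n /beta01 /andP[? ?]; apply/andP; split; nra.
- exact: mxint_weightedZ.
Qed.

Lemma box_ptrA (rho : 'M[C]_4) :
  mxint mu (@qstate R) = ptrA rho -> box mu (ptrA rho).
Proof.
move=> ans; exists (fun=> 1); split; first exact: measurable_cst.
  by move=> *; rewrite lexx ler01.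
by rewrite mxint_weighted1.
Qed.

Lemma box_ptrA_sub (rho : 'M[C]_4) (X : 'M[C]_2) :
  mxint mu (@qstate R) = ptrA rho -> box mu X -> box mu (ptrA rho - X).
Proof.
move=> ans [beta [mbeta beta01 ->]].
have [m1 one01] : measurable_fun S2 (fun=> 1 : R) /\ forall n, S2 n -> 0 <= (1 : R) <= 1.
  by split; [exact: measurable_cst | move=> *; rewrite lexx ler01].
exists (fun n => 1 - beta n); split.
- exact: measurable_funB.
- by move=> n /beta01 /andP[? ?]; apply/andP; split; lra.
- by rewrite -ans -mxint_weighted1 (mxint_weightedB m1 one01 mbeta beta01).
Qed.

End Box.

Section EffectsInBox.
Variable R : realType.
Local Notation C := R[i].
Variables (rho : 'M[C]_4) (mu : probability (R3 R) R).
Hypothesis ansatz_rho : mxint mu (@qstate R) = ptrA rho.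
Hypothesis states_in_box : EPR rho @` @S_A R `<=` box mu.

Lemma box_EPR_trace_le1 (M : 'M[C]_2) (t : R) :
  M_A M -> \tr M = t%:C%C -> 0 <= t <= 1 -> box mu (EPR rho M).
Proof.
move=> eM trM t01; have [t0 | t_neq0] := eqVneq t 0.
  have -> : M = (0 : R)%:C%C *: 1%:M.
    by rewrite scale0r; apply: psd_trace_eq0 (effect_psd eM).1 _; rewrite trM t0.
  by rewrite linearZ /= EPR1; apply: box_scale (box_ptrA ansatz_rho); rewrite lexx ler01.
have t_gt0 : 0 < t by rewrite lt_neqAle eq_sym t_neq0; case/andP: t01.
have -> : M = t%:C%C *: (t^-1%:C%C *: M) by rewrite scalerA -rmorphM mulfV ?scale1r.
rewrite linearZ /=; apply: box_scale t01 _; apply: states_in_box.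
by exists (t^-1%:C%C *: M) => //; exact: effect_normalize.
Qed.

Lemma box_EPR_effect (M : 'M[C]_2) : M_A M -> box mu (EPR rho M).
Proof.
move=> eM; have [t trM /andP[t_ge0 t_le2]] := effect_trace eM.
have [t_le1 | t_gt1] := leP t 1.
  by apply: box_EPR_trace_le1 eM trM _; apply/andP.
have trC : \tr (1%:M - M) = (2 - t)%:C%C.
  by rewrite linearB /= mxtrace1 trM rmorphB rmorph_nat.
have EPR_compl : EPR rho (1%:M - M) = ptrA rho - EPR rho M by rewrite linearB /= EPR1.
have box_compl : box mu (ptrA rho - EPR rho M).
  rewrite -EPR_compl; apply: box_EPR_trace_le1 (effect_compl eM) trC _.
  by apply/andP; split; lra.
by rewrite -[EPR rho M](subKr (ptrA rho)); exact: box_ptrA_sub.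
Qed.

End EffectsInBox.

Theorem lemma1 (R : realType) (rho : 'M[R[i]]_4) (mu : probability (R3 R) R) :
  density rho -> ansatz rho mu ->
  ((EPR rho @` @M_A R) `<=` box mu <-> (EPR rho @` @S_A R) `<=` box mu).
Proof.
move=> _ [_ ansatz_rho]; split=> [effects_in_box | states_in_box] _ [M eM <-].
  by apply: effects_in_box; exists M => //; case: eM.
exact: box_EPR_effect.
Qed.
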